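(* Let $m,n\ge0$, $0\le k\le\min(m,n)$, and let $i,j$ be integers with $0\le i\le m$, $0\le j\le n$ and $k<i+j\le m+n-k$. Then $$c_{m,n,k}(i,j)=c_{m,n,k}(i,j-1)+c_{m,n,k}(i-1,j),$$ with the convention that $c_{m,n,k}(a,b)=0$ whenever $(a,b)$ does not satisfy $0\le a\le m$, $0\le b\le n$, $k\le a+b\le m+n-k$.
   Context: Let $e,f,h$ be the standard basis of $\mathfrak{sl}(2,\mathbb{C})$. $V(n)$ is the irreducible representation of highest weight $n$ with fixed highest weight vector $\phi_n$; $\{f^i\phi_n\}_{0\le i\le n}$ is a basis, $f^{n+1}\phi_n=0$. $\mathfrak{sl}(2)$ acts on $V(m)\otimes V(n)$ by $X(v\otimes w)=Xv\otimes w+v\otimes Xw$. For $0\le k\le\min(m,n)$, $\phi_{m,n,k}=\sum_{l=0}^{k}(-1)^l\binom{m-l}{k-l}\binom{n-k+l}{l} f^l\phi_m\otimes f^{k-l}\phi_n$ (a highest weight vector of weight $m+n-2k$). The coordinates $c_{m,n,k}(i,j)$ are defined by $f^{p-k}\phi_{m,n,k}=\sum_{i+j=p,\,0\le i\le m,\,0\le j\le n} c_{m,n,k}(i,j)\, f^i\phi_m\otimes f^j\phi_n$ for $k\le p\le m+n-k$. *)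

(* Coefficients in algC (algebraic complex numbers) standing for C. *)
From HB Require Import structures.
From mathcomp Require Import all_boot all_order all_algebra all_field.
Set Implicit Arguments. Unset Strict Implicit. Unset Printing Implicit Defensive.
Import Order.TTheory GRing.Theory Num.Theory.
Local Open Scope ring_scope.

(* An element of V(m) (x) V(n) is represented by its coordinate function
   (a, b) |-> coefficient of f^a phi_m (x) f^b phi_n; only coordinates with
   a <= m, b <= n are meaningful (the others are kept at 0). *)
Definition tvec := nat -> nat -> algC.

(* action of f on V(m) (x) V(n):
   f (f^a phi_m (x) f^b phi_n) = f^(a+1) phi_m (x) f^b phi_n + f^a phi_m (x) f^(b+1) phi_n,
   with f^(m+1) phi_m = 0 and f^(n+1) phi_n = 0. *)
Definition fop (m n : nat) (v : tvec) : tvec := fun a b =>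
  if (a <= m)%N && (b <= n)%N then
    (if a is a'.+1 then v a' b else 0) + (if b is b'.+1 then v a b' else 0)
  else 0.

(* phi_{m,n,k} = sum_{l=0}^k (-1)^l C(m-l,k-l) C(n-k+l,l) f^l phi_m (x) f^(k-l) phi_n *)
Definition phi_mnk (m n k : nat) : tvec := fun a b =>
  if [&& (a + b == k)%N, (a <= k)%N, (a <= m)%N & (b <= n)%N] then
    (-1) ^+ a * ('C(m - a, k - a))%:R * ('C(n - k + a, a))%:R
  else 0.

(* c_{m,n,k}(a,b): coordinate of f^a phi_m (x) f^b phi_n in f^(a+b-k) phi_{m,n,k}
   when (a,b) is in the admissible region, and 0 otherwise (convention). *)
Definition cmnk (m n k : nat) (a b : int) : algC :=
  match a, b with
  | Posz a', Posz b' =>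
      if [&& (a' <= m)%N, (b' <= n)%N, (k <= a' + b')%N & (a' + b' <= m + n - k)%N]
      then iter (a' + b' - k) (fop m n) (phi_mnk m n k) a' b'
      else 0
  | _, _ => 0
  end.

(* Each coordinate of f^(p-k) phi_{m,n,k} is obtained by applying f once more
   to f^(p-1-k) phi_{m,n,k}, and f sends f^a phi_m (x) f^b phi_n to the sum of
   its two upper neighbours; reading off the coordinate of f^i phi_m (x) f^j phi_n
   gives the Pascal-type recurrence. *)
From HB Require Import structures.
From mathcomp Require Import all_boot all_order all_algebra all_field.
From mathcomp Require Import zify.
Import Order.TTheory GRing.Theory Num.Theory.
Local Open Scope ring_scope.

Section Coordinates.

Variables m n k : nat.

Local Notation fpow p := (iter p (fop m n) (phi_mnk m n k)).

Lemma fopE (v : tvec) (a b : nat) : (a <= m)%N -> (b <= n)%N ->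
  fop m n v a b =
    (if a is a'.+1 then v a' b else 0) + (if b is b'.+1 then v a b' else 0).
Proof. by move=> am bn; rewrite /fop am bn. Qed.

Lemma cmnk_iter (a b : nat) :
  (a <= m)%N -> (b <= n)%N -> (k <= a + b)%N -> (a + b <= m + n - k)%N ->
  cmnk m n k a b = fpow (a + b - k) a b.
Proof. by move=> am bn kab abk; rewrite /cmnk am bn kab abk. Qed.

Lemma cmnk_predr (a : int) (b : nat) :
  cmnk m n k a (Posz b - 1) = if b is b'.+1 then cmnk m n k a b' else 0.
Proof. by case: b => [|b]; [case: a | rewrite -addn1 PoszD addrK]. Qed.

Lemma cmnk_predl (a : nat) (b : int) :
  cmnk m n k (Posz a - 1) b = if a is a'.+1 then cmnk m n k a' b else 0.
Proof. by case: a => [|a] //; rewrite -addn1 PoszD addrK. Qed.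

Lemma cmnk_fop (a b : nat) :
  (a <= m)%N -> (b <= n)%N -> (k < a + b)%N -> (a + b <= m + n - k)%N ->
  cmnk m n k a b = fop m n (fpow (a + b - k).-1) a b.
Proof.
move=> am bn kab abk; rewrite cmnk_iter ?(ltnW kab) //.
by rewrite -[in LHS](prednK (_ : 0 < a + b - k)%N) ?subn_gt0.
Qed.

Lemma fpow_cmnk (p a b : nat) : (a <= m)%N -> (b <= n)%N ->
  (k <= a + b)%N -> (a + b <= m + n - k)%N -> p = (a + b - k)%N ->
  fpow p a b = cmnk m n k a b.
Proof. by move=> am bn kab abk ->; rewrite cmnk_iter. Qed.

End Coordinates.

Theorem proposition7p1 (m n k i j : nat) :
  (k <= minn m n)%N -> (i <= m)%N -> (j <= n)%N ->
  (k < i + j)%N -> (i + j <= m + n - k)%N ->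
  cmnk m n k (Posz i) (Posz j) =
    cmnk m n k (Posz i) (Posz j - 1) + cmnk m n k (Posz i - 1) (Posz j).
Proof.
move=> _ im jn kij ijk.
rewrite cmnk_fop // fopE // cmnk_predr cmnk_predl addrC.
case: i im kij ijk => [|i] im kij ijk; case: j jn kij ijk => [|j] jn kij ijk //.
- by rewrite fpow_cmnk //; lia.
- by rewrite fpow_cmnk //; lia.
- by rewrite !fpow_cmnk //; lia.
Qed.
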